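(* Let $v$ be an aperiodic infinite word over $\{0,1\}$, with $h(\ell)$ the number of $1$'s among its first $\ell$ digits. If $$\liminf_{\ell\to\infty}\frac{h(\ell)}{\ell}>\frac{\ln2}{\ln3},$$ then $\Phi_{\mathbb{R}}(v)$ exists and $\Phi_{\mathbb{R}}(v)<-1$.
   Context: For an infinite word $v$ over $\{0,1\}$ whose $1$'s are at positions $d_0<d_1<\cdots$ (counted from $0$), $\Phi_{\mathbb{R}}(v)$ is the real sum $-\sum_{i\ge0}2^{d_i}/3^{i+1}$; it exists if the series converges in $\mathbb{R}$. Aperiodic means not eventually periodic. *)

From Stdlib Require Import Reals Lra Lia.
From Coquelicot Require Import Coquelicot.
Open Scope R_scope.

(* An infinite word over {0,1} is v : nat -> bool (true = digit 1), positions from 0. *)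

Fixpoint h (v : nat -> bool) (l : nat) : nat :=
  match l with
  | O => O
  | S k => (h v k + (if v k then 1 else 0))%nat
  end.

Definition eventually_periodic (v : nat -> bool) : Prop :=
  exists p N : nat, (0 < p)%nat /\ forall n, (N <= n)%nat -> v (n + p)%nat = v n.

Definition aperiodic (v : nat -> bool) : Prop := ~ eventually_periodic v.

Definition enumerates_ones (v : nat -> bool) (d : nat -> nat) : Prop :=
  (forall i, (d i < d (S i))%nat) /\ (forall n, v n = true <-> exists i, d i = n).

(* The terms of the series defining Phi_R(v): -2^{d_i}/3^{i+1}. *)
Definition Phi_term (d : nat -> nat) (i : nat) : R :=
  - (2 ^ (d i) / 3 ^ (S i)).

From Stdlib Require Import Reals Lra Lia Arith Wf_nat Classical ClassicalEpsilon.
From Coquelicot Require Import Coquelicot.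
Open Scope R_scope.

(* Combinatorics: an aperiodic word has infinitely many ones, so iterating
   "next one at or after N" yields the enumeration d of its ones; counting
   gives h(d_i + 1) = i + 1, and aperiodicity (v <> 1^omega) gives some i < d_i.

   Analysis: pick c with ln 2 / ln 3 < c below the liminf, so b = 3^c > 2.
   Eventually (i+1)/(d_i+1) > c, hence 3^(i+1) > b^(d_i) and the i-th weight
   2^(d_i)/3^(i+1) is at most (2/b)^i: the series converges by comparison
   with a geometric one.  Since d_i >= i, each weight dominates the weight
   2^i/3^(i+1) of the word 1^omega, whose weights sum to exactly 1, and the
   domination is strict at a displaced index; hence Phi_R(v) < -1. *)

Lemma h_constant_on_zeros (v : nat -> bool) (a k : nat) :
  (forall j, (a <= j < a + k)%nat -> v j = false) -> h v (a + k) = h v a.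
Proof.
  induction k as [|k IH]; intro Hz.
  - f_equal; lia.
  - replace (a + S k)%nat with (S (a + k)) by lia. simpl.
    rewrite Hz by lia. rewrite IH; [lia|]. intros j Hj; apply Hz; lia.
Qed.

(* An aperiodic word has infinitely many ones (otherwise it ends in 0^omega). *)
Lemma aperiodic_infinitely_many_ones (v : nat -> bool) :
  aperiodic v -> forall N, exists m, (N <= m)%nat /\ v m = true.
Proof.
  intros Ha N. apply NNPP; intro Hnone. apply Ha. exists 1%nat, N. split; [lia|].
  assert (Hzero : forall m, (N <= m)%nat -> v m = false).
  { intros m Hm. destruct (v m) eqn:E; auto. exfalso; apply Hnone; eauto. }
  intros n Hn. rewrite !Hzero by lia. reflexivity.
Qed.

Lemma strictly_increasing_ge_index (d : nat -> nat) :
  (forall i, (d i < d (S i))%nat) -> forall i, (i <= d i)%nat.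
Proof.
  intros Hinc i. induction i as [|i IH]; [lia|]. specialize (Hinc i). lia.
Qed.

Lemma strictly_increasing_lt (d : nat -> nat) :
  (forall i, (d i < d (S i))%nat) -> forall i j, (i < j)%nat -> (d i < d j)%nat.
Proof.
  intros Hinc i j Hij. induction Hij as [|j Hij IH]; [apply Hinc|].
  specialize (Hinc j). lia.
Qed.

Section Enumeration.
Variable v : nat -> bool.
Hypothesis infinitely_many_ones : forall N, exists m, (N <= m)%nat /\ v m = true.

Lemma next_one (N : nat) :
  { m | (N <= m)%nat /\ v m = true /\ forall k, (N <= k < m)%nat -> v k = false }.
Proof.
  apply constructive_indefinite_description.
  destruct (dec_inh_nat_subset_has_unique_least_element
              (fun m => (N <= m)%nat /\ v m = true)) as [m [[[HNm Hvm] Hleast] _]].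
  - intro n. destruct (le_lt_dec N n), (v n);
      solve [left; auto | right; intros [? ?]; [lia || discriminate]].
  - apply infinitely_many_ones.
  - exists m. repeat split; auto. intros k Hk. destruct (v k) eqn:E; auto.
    assert (m <= k)%nat by (apply Hleast; split; auto; lia). lia.
Qed.

Lemma ones_enumeration_exists : exists d, enumerates_ones v d.
Proof.
  set (nxt := fun N => proj1_sig (next_one N)).
  assert (Hnxt : forall N, (N <= nxt N)%nat /\ v (nxt N) = true /\
                           forall k, (N <= k < nxt N)%nat -> v k = false)
    by (intro N; exact (proj2_sig (next_one N))).
  set (d := fix d i := match i with O => nxt O | S i => nxt (S (d i)) end).
  assert (Hinc : forall i, (d i < d (S i))%nat)
    by (intro i; simpl; destruct (Hnxt (S (d i))); lia).
  exists d. split; [exact Hinc|]. intro n. split.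
  - intro Hvn.
    assert (Hcover : forall i m, (m <= d i)%nat -> v m = true -> exists j, d j = m).
    { induction i as [|i IH]; intros m Hm Hvm.
      - destruct (Nat.eq_dec m (d 0%nat)) as [->|]; [eauto|].
        rewrite (proj2 (proj2 (Hnxt 0%nat))) in Hvm by (simpl in *; lia). discriminate.
      - destruct (le_lt_dec m (d i)); [eauto|].
        destruct (Nat.eq_dec m (d (S i))) as [->|]; [eauto|].
        rewrite (proj2 (proj2 (Hnxt (S (d i))))) in Hvm by (simpl in *; lia).
        discriminate. }
    apply (Hcover n n); [apply strictly_increasing_ge_index|]; auto.
  - intros [[|i] <-]; apply Hnxt.
Qed.

End Enumeration.

Section EnumerationFacts.
Variables (v : nat -> bool) (d : nat -> nat).
Hypothesis enum : enumerates_ones v d.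

Lemma no_ones_before_first (n : nat) : (n < d 0)%nat -> v n = false.
Proof.
  intro Hn. destruct (v n) eqn:E; auto.
  destruct (proj1 (proj2 enum n) E) as [j <-].
  destruct j as [|j]; [lia|].
  pose proof (strictly_increasing_lt d (proj1 enum) 0 (S j)). lia.
Qed.

Lemma no_ones_between (i n : nat) : (d i < n < d (S i))%nat -> v n = false.
Proof.
  intro Hn. destruct (v n) eqn:E; auto.
  destruct (proj1 (proj2 enum n) E) as [j <-].
  pose proof (strictly_increasing_lt d (proj1 enum)) as Hmono.
  destruct (le_lt_dec j i) as [Hji | Hij].
  - destruct (Nat.eq_dec j i) as [->|]; [lia|].
    specialize (Hmono j i ltac:(lia)). lia.
  - destruct (Nat.eq_dec j (S i)) as [->|]; [lia|].
    specialize (Hmono (S i) j ltac:(lia)). lia.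
Qed.

Lemma h_at_enumerated_one (i : nat) : h v (S (d i)) = S i.
Proof.
  assert (Hone : forall k, v (d k) = true) by (intro k; apply (proj2 enum); eauto).
  induction i as [|i IH].
  - change (h v (S (d 0%nat))) with (h v (d 0%nat) + (if v (d 0%nat) then 1 else 0))%nat.
    rewrite Hone.
    pose proof (h_constant_on_zeros v 0 (d 0%nat)) as Hz. simpl in Hz.
    rewrite Hz; [reflexivity|]. intros; apply no_ones_before_first; lia.
  - change (h v (S (d (S i)))) with (h v (d (S i)) + (if v (d (S i)) then 1 else 0))%nat.
    rewrite Hone. pose proof (proj1 enum i) as Hinc.
    pose proof (h_constant_on_zeros v (S (d i)) (d (S i) - S (d i))) as Hz.
    replace (S (d i) + (d (S i) - S (d i)))%nat with (d (S i)) in Hz by lia.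
    rewrite Hz; [lia|]. intros j Hj. apply (no_ones_between i); lia.
Qed.

(* An aperiodic word is not 1^omega, so some one is displaced: i < d i. *)
Lemma aperiodic_enumeration_displaced : aperiodic v -> exists i, (i < d i)%nat.
Proof.
  intro Ha. apply NNPP; intro Hnone. apply Ha. exists 1%nat, 0%nat. split; [lia|].
  assert (Hid : forall i, d i = i).
  { intro i. pose proof (strictly_increasing_ge_index d (proj1 enum) i).
    destruct (Nat.eq_dec (d i) i); auto. exfalso; apply Hnone; exists i; lia. }
  assert (Hall : forall n, v n = true) by (intro n; apply (proj2 enum); eauto).
  intros n _. rewrite !Hall. reflexivity.
Qed.

End EnumerationFacts.

Lemma Series_ge_term (e : nat -> R) (n0 : nat) :
  (forall n, 0 <= e n) -> ex_series e -> e n0 <= Series e.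
Proof.
  intros He0 Hex.
  rewrite (Series_incr_n e (S n0)) by (auto; lia). simpl pred.
  assert (Htail : 0 <= Series (fun k => e (S n0 + k)%nat)).
  { replace 0 with (Series (fun k => 0 * e (S n0 + k)%nat))
      by (rewrite Series_scal_l; ring).
    apply Series_le.
    - intro n; rewrite Rmult_0_l; split; [lra | apply He0].
    - apply (ex_series_incr_n e (S n0)); auto. }
  destruct n0 as [|n0].
  - change (sum_f_R0 e 0) with (e 0%nat). lra.
  - change (sum_f_R0 e (S n0)) with (sum_f_R0 e n0 + e (S n0)).
    pose proof (cond_pos_sum e n0 He0). lra.
Qed.

Lemma Series_lt_strict (a b : nat -> R) (n0 : nat) :
  (forall n, a n <= b n) -> a n0 < b n0 ->
  ex_series a -> ex_series b -> Series a < Series b.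
Proof.
  intros Hle Hlt Ha Hb.
  pose proof (Series_ge_term (fun n => b n - a n) n0) as Hge.
  rewrite Series_minus in Hge by auto.
  assert (b n0 - a n0 <= Series b - Series a)
    by (apply Hge; [intro n; specialize (Hle n); lra | apply (ex_series_minus b a); auto]).
  lra.
Qed.

Lemma ex_series_geometric_domination (p : nat -> R) (r : R) (N : nat) :
  0 <= r < 1 -> (forall i, (N <= i)%nat -> Rabs (p i) <= r ^ i) -> ex_series p.
Proof.
  intros Hr Hdom.
  apply (ex_series_incr_n p N).
  apply (@ex_series_le R_AbsRing R_CompleteNormedModule _ (fun k => r ^ N * r ^ k)).
  - intro k. change (norm (p (N + k)%nat)) with (Rabs (p (N + k)%nat)).
    rewrite <- pow_add. apply Hdom; lia.
  - apply (ex_series_scal_l (r ^ N) (fun k => r ^ k)).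
    apply ex_series_geom. rewrite Rabs_pos_eq; lra.
Qed.

(* The word 1111... has Phi_R = -1: the weights 2^i/3^(i+1) sum to 1. *)
Lemma is_series_weights_all_ones : is_series (fun i => 2 ^ i / 3 ^ S i) 1.
Proof.
  assert (Hgeo : is_series (fun n => (2 / 3) ^ n) (/ (1 - 2 / 3)))
    by (apply is_series_geom; rewrite Rabs_pos_eq; lra).
  pose proof (@is_series_scal R_AbsRing R_NormedModule (/ 3) _ _ Hgeo) as Hs.
  replace 1 with (scal (/ 3) (/ (1 - 2 / 3)))
    by (unfold scal; simpl; unfold mult; simpl; field).
  eapply is_series_ext; [|exact Hs].
  intro n. unfold scal; simpl. unfold mult; simpl. unfold Rdiv.
  rewrite Rpow_mult_distr, pow_inv. field. apply pow_nonzero; lra.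
Qed.

Lemma weight_le (k m n : nat) : (m <= n)%nat -> 2 ^ m / 3 ^ k <= 2 ^ n / 3 ^ k.
Proof.
  intro Hmn. unfold Rdiv. apply Rmult_le_compat_r.
  - left; apply Rinv_0_lt_compat, pow_lt; lra.
  - apply Rle_pow; [lra | exact Hmn].
Qed.

Lemma weight_lt (k m n : nat) : (m < n)%nat -> 2 ^ m / 3 ^ k < 2 ^ n / 3 ^ k.
Proof.
  intro Hmn. unfold Rdiv. apply Rmult_lt_compat_r.
  - apply Rinv_0_lt_compat, pow_lt; lra.
  - apply Rlt_pow; [lra | exact Hmn].
Qed.

Lemma LimInf_seq_margin (u : nat -> R) (a : R) :
  Rbar_lt a (LimInf_seq u) ->
  exists c, a < c /\ exists N, forall l, (N <= l)%nat -> c < u l.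
Proof.
  unfold LimInf_seq. destruct (ex_LimInf_seq u) as [l Hl]; simpl.
  destruct l as [l0| |]; simpl; intro Hlt; try contradiction.
  - assert (Hp : 0 < (l0 - a) / 2) by lra.
    destruct (Hl (mkposreal _ Hp)) as [_ [N HN]]. simpl in HN.
    exists (l0 - (l0 - a) / 2). split; [lra | eauto].
  - destruct (Hl (a + 1)) as [N HN]. exists (a + 1). split; [lra | eauto].
Qed.

(* The density threshold ln 2 / ln 3 is exactly where 3^c crosses 2. *)
Lemma Rpower3_gt_2 (c : R) : ln 2 / ln 3 < c -> 2 < Rpower 3 c.
Proof.
  intro Hc.
  assert (Hln3 : 0 < ln 3) by (rewrite <- ln_1; apply ln_increasing; lra).
  unfold Rpower. rewrite <- (exp_ln 2) by lra. apply exp_increasing.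
  apply Rmult_lt_reg_r with (/ ln 3); [apply Rinv_0_lt_compat; exact Hln3|].
  rewrite Rmult_assoc, Rinv_r by lra. rewrite Rmult_1_r. exact Hc.
Qed.

Lemma weight_geometric_bound (c : R) (i m : nat) :
  2 < Rpower 3 c -> (i <= m)%nat -> c < INR (S i) / INR (S m) ->
  2 ^ m / 3 ^ S i <= (2 / Rpower 3 c) ^ i.
Proof.
  set (b := Rpower 3 c). intros Hb Him Hdens.
  assert (Hr : 0 <= 2 / b <= 1).
  { split; [apply Rdiv_le_0_compat; lra|].
    apply Rmult_le_reg_r with b; [lra|].
    unfold Rdiv; rewrite Rmult_assoc, Rinv_l by lra. lra. }
  assert (Hexp : c * INR (S m) < INR (S i)).
  { apply Rmult_lt_reg_r with (/ INR (S m)).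
    - apply Rinv_0_lt_compat, lt_0_INR; lia.
    - rewrite Rmult_assoc, Rinv_r by (apply not_0_INR; lia).
      rewrite Rmult_1_r. exact Hdens. }
  assert (Hpow : b ^ m < 3 ^ S i).
  { apply Rle_lt_trans with (b ^ S m); [apply Rle_pow; [lra | lia]|].
    unfold b. rewrite <- Rpower_pow by (unfold Rpower; apply exp_pos).
    rewrite Rpower_mult, <- Rpower_pow by lra. apply Rpower_lt; lra. }
  apply Rle_trans with ((2 / b) ^ m).
  - unfold Rdiv. rewrite Rpow_mult_distr, pow_inv.
    apply Rmult_le_compat_l; [apply pow_le; lra|].
    apply Rinv_le_contravar; [apply pow_lt; lra | lra].
  - replace m with (i + (m - i))%nat by lia. rewrite pow_add.
    rewrite <- (Rmult_1_r ((2 / b) ^ i)) at 2.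
    apply Rmult_le_compat_l; [apply pow_le; lra|].
    rewrite <- (pow1 (m - i)). apply pow_incr. exact Hr.
Qed.

Lemma weights_summable (v : nat -> bool) (d : nat -> nat) :
  enumerates_ones v d ->
  Rbar_lt (Finite (ln 2 / ln 3)) (LimInf_seq (fun l : nat => INR (h v l) / INR l)) ->
  ex_series (fun i => 2 ^ d i / 3 ^ S i).
Proof.
  intros Hd Hlim.
  destruct (LimInf_seq_margin _ _ Hlim) as [c [Hc [N HN]]].
  pose proof (Rpower3_gt_2 c Hc) as Hb.
  apply (ex_series_geometric_domination _ (2 / Rpower 3 c) N).
  - split; [apply Rdiv_le_0_compat; lra|].
    apply Rmult_lt_reg_r with (Rpower 3 c); [lra|].
    unfold Rdiv; rewrite Rmult_assoc, Rinv_l by lra. lra.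
  - intros i Hi.
    pose proof (strictly_increasing_ge_index d (proj1 Hd) i) as Hid.
    rewrite Rabs_pos_eq by (apply Rdiv_le_0_compat; [apply pow_le | apply pow_lt]; lra).
    apply weight_geometric_bound; auto.
    rewrite <- (h_at_enumerated_one v d Hd i). apply HN. lia.
Qed.

Theorem lemma23 (v : nat -> bool) :
  aperiodic v ->
  Rbar_lt (Finite (ln 2 / ln 3))
          (LimInf_seq (fun l : nat => INR (h v l) / INR l)) ->
  exists d : nat -> nat, enumerates_ones v d /\
    exists L : R, is_series (Phi_term d) L /\ L < -1.
Proof.
  intros Ha Hlim.
  destruct (ones_enumeration_exists v (aperiodic_infinitely_many_ones v Ha)) as [d Hd].
  set (p := fun i => 2 ^ d i / 3 ^ S i).
  assert (Hp : ex_series p) by exact (weights_summable v d Hd Hlim).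
  exists d. split; [exact Hd|]. exists (- Series p). split.
  - exact (@is_series_opp R_AbsRing R_NormedModule p _ (Series_correct _ Hp)).
  - destruct (aperiodic_enumeration_displaced v d Hd Ha) as [n0 Hn0].
    assert (Hgt : Series (fun i => 2 ^ i / 3 ^ S i) < Series p).
    { apply (Series_lt_strict _ _ n0).
      - intro i. apply weight_le, (strictly_increasing_ge_index d (proj1 Hd)).
      - apply weight_lt, Hn0.
      - eexists; apply is_series_weights_all_ones.
      - exact Hp. }
    rewrite (is_series_unique _ 1 is_series_weights_all_ones) in Hgt. lra.
Qed.
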